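(* Let $p:C\to G$ be a normal covering of a connected graph $G$ with deck transformation group $\mathcal{D}$, let $\mathcal{T}=(T,(V_t)_{t\in T})$ be a regular $\mathcal{D}$-canonical tree-decomposition of $C$, and let $\mathcal{H}=(H,(G_h)_{h\in H})$ be defined from $\mathcal{T}$ via $p$ as in the context. Then $\mathcal{H}$ is an honest graph-decomposition of $G$.
   Context: Graphs may have loops and parallel edges and are viewed as 1-complexes; covering spaces are connected. A tree-decomposition $(T,(V_t))$ of $C$ ($T$ a tree, $V_t\subseteq V(C)$ non-empty) satisfies $C=\bigcup_tC[V_t]$ and $\{t:v\in V_t\}$ induces a connected subtree for every vertex $v$. Each edge $t_1t_2$ of $T$ induces the separation $\{\bigcup_{s\in T_1}V_s,\bigcup_{s\in T_2}V_s\}$ ($T_i$ the component of $T-t_1t_2$ containing $t_i$); the decomposition is regular if no such separation has a side equal to $V(C)$. It is $\mathcal{D}$-canonical if there is a group homomorphism $\varphi\mapsto(\varphi,\psi_\varphi)$ from $\mathcal{D}$ to pairs with $\psi_\varphi$ an automorphism of $T$ and $\varphi(V_t)=V_{\psi_\varphi(t)}$ for all $t$; for regular decompositions $\psi_\varphi$ is unique, giving an action of $\mathcal{D}$ on $T$. Construction: $H=T/\mathcal{D}$ is the orbit graph (vertices the $\mathcal{D}$-orbits of nodes, edges the orbits of edges, the orbit of an edge joining the orbits of its endpoints), and $G_h=p(C[V_t])$ for any $t\in h$ (independent of choice). A graph-decomposition of $G$ is a pair $(H,(G_h))$ with subgraphs $G_h\subseteq G$, $G=\bigcup_hG_h$,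 and $H[\{h:v\in G_h\}]$ connected for each vertex $v$; it is honest if $G_h\cap G_{h'}\neq\emptyset$ for every edge $hh'$ of $H$. *)

(* Graphs (possibly infinite, with loops and parallel edges)
   are encoded as 1-complexes via darts (oriented half-edges): each edge is
   an orbit {d, rev d} of the fixed-point-free involution rev, and
   tl d is the vertex at which dart d starts.  A loop at v is an edge with
   two distinct darts both starting at v. *)
From Stdlib Require Import List.
Import ListNotations.
Set Implicit Arguments.

Record graph := Graph {
  gV : Type;
  gD : Type;
  gtl : gD -> gV;
  grev : gD -> gD;
  grev_inv : forall d, grev (grev d) = d;
  grev_nofix : forall d, grev d <> d }.

Fixpoint walk (X : Type) (R : X -> X -> Prop) (x : X) (l : list X) (y : X)
  : Prop :=
  match l with
  | [] => x = y
  | z :: l' => R x z /\ walk R z l' y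
  end.

Definition reach (X : Type) (R : X -> X -> Prop) (x y : X) : Prop :=
  exists l, walk R x l y.

Definition gadj (G : graph) (u w : gV G) : Prop :=
  exists d, gtl G d = u /\ gtl G (grev G d) = w.

Definition connected_graph (G : graph) : Prop :=
  forall u w : gV G, reach (@gadj G) u w.

Definition bij (A B : Type) (f : A -> B) : Prop :=
  exists g : B -> A, (forall x, g (f x) = x) /\ (forall y, f (g y) = y).

Definition ghom (C G : graph) (fV : gV C -> gV G) (fD : gD C -> gD G) : Prop :=
  (forall d, gtl G (fD d) = fV (gtl C d)) /\
  (forall d, fD (grev C d) = grev G (fD d)).

Definition covering (C G : graph) (pV : gV C -> gV G) (pD : gD C -> gD G)
  : Prop :=
  connected_graph C /\ ghom C G pV pD /\
  (forall w, exists v, pV v = w) /\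
  (forall v (d' : gD G), gtl G d' = pV v ->
     exists d, (gtl C d = v /\ pD d = d') /\
       forall e, gtl C e = v -> pD e = d' -> e = d).

Definition deck (C G : graph) (pV : gV C -> gV G) (pD : gD C -> gD G)
  (fV : gV C -> gV C) (fD : gD C -> gD C) : Prop :=
  bij fV /\ bij fD /\ ghom C C fV fD /\
  (forall v, pV (fV v) = pV v) /\ (forall d, pD (fD d) = pD d).

Definition normal_covering (C G : graph) (pV : gV C -> gV G)
  (pD : gD C -> gD G) : Prop :=
  covering C G pV pD /\
  forall v w, pV v = pV w ->
    exists fV fD, deck C G pV pD fV fD /\ fV v = w.

Definition has_cycle (N : Type) (adj : N -> N -> Prop) : Prop :=
  exists x l y, walk adj x l y /\ adj y x /\ NoDup (x :: l) /\ 2 <= length l.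

Definition is_tree (N : Type) (adj : N -> N -> Prop) : Prop :=
  (forall s t, adj s t -> adj t s) /\ (forall s, ~ adj s s) /\
  (forall s t, reach adj s t) /\ ~ has_cycle adj.

Definition tree_aut (N : Type) (adj : N -> N -> Prop) (f : N -> N) : Prop :=
  bij f /\ forall s t, adj s t <-> adj (f s) (f t).

Definition tree_decomposition (C : graph) (N : Type) (adj : N -> N -> Prop)
  (Vt : N -> gV C -> Prop) : Prop :=
  is_tree adj /\
  (forall t, exists v, Vt t v) /\
  (forall v, exists t, Vt t v) /\
  (forall d, exists t, Vt t (gtl C d) /\ Vt t (gtl C (grev C d))) /\
  (forall v t1 t2, Vt t1 v -> Vt t2 v ->
     reach (fun a b => adj a b /\ Vt a v /\ Vt b v) t1 t2).

Definition adj_minus (N : Type) (adj : N -> N -> Prop) (t1 t2 : N)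
  (a b : N) : Prop :=
  adj a b /\ ~ (a = t1 /\ b = t2) /\ ~ (a = t2 /\ b = t1).

(* the side  U_{s in T_1} V_s  of the separation induced by edge t1t2,
   T_1 the component of T - t1t2 containing t1 *)
Definition sep_side (C : graph) (N : Type) (adj : N -> N -> Prop)
  (Vt : N -> gV C -> Prop) (t1 t2 : N) (v : gV C) : Prop :=
  exists s, reach (adj_minus adj t1 t2) t1 s /\ Vt s v.

Definition regular_td (C : graph) (N : Type) (adj : N -> N -> Prop)
  (Vt : N -> gV C -> Prop) : Prop :=
  forall t1 t2, adj t1 t2 ->
    (exists v, ~ sep_side C adj Vt t1 t2 v) /\
    (exists v, ~ sep_side C adj Vt t2 t1 v).

(* psi witnesses that the decomposition is D-canonical: a homomorphism
   phi |-> (phi, psi_phi) from the deck group into pairs *)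
Definition canonical_witness (C G : graph) (pV : gV C -> gV G)
  (pD : gD C -> gD G) (N : Type) (adj : N -> N -> Prop)
  (Vt : N -> gV C -> Prop)
  (psi : (gV C -> gV C) -> (gD C -> gD C) -> N -> N) : Prop :=
  (forall fV fD, deck C G pV pD fV fD ->
     tree_aut adj (psi fV fD) /\
     forall t w, Vt (psi fV fD t) w <-> exists v, Vt t v /\ fV v = w) /\
  (forall fV1 fD1 fV2 fD2, deck C G pV pD fV1 fD1 -> deck C G pV pD fV2 fD2 ->
     forall t, psi (fun v => fV1 (fV2 v)) (fun d => fD1 (fD2 d)) t
               = psi fV1 fD1 (psi fV2 fD2 t)).

Definition D_canonical (C G : graph) (pV : gV C -> gV G)
  (pD : gD C -> gD G) (N : Type) (adj : N -> N -> Prop)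
  (Vt : N -> gV C -> Prop) : Prop :=
  exists psi, canonical_witness C G pV pD adj Vt psi.

Definition same_orbit (C G : graph) (pV : gV C -> gV G) (pD : gD C -> gD G)
  (N : Type) (psi : (gV C -> gV C) -> (gD C -> gD C) -> N -> N)
  (t s : N) : Prop :=
  exists fV fD, deck C G pV pD fV fD /\ psi fV fD t = s.

Definition is_orbit (C G : graph) (pV : gV C -> gV G) (pD : gD C -> gD G)
  (N : Type) (psi : (gV C -> gV C) -> (gD C -> gD C) -> N -> N)
  (h : N -> Prop) : Prop :=
  exists t, forall s, h s <-> same_orbit C G pV pD psi t s.

Definition orbitV (C G : graph) (pV : gV C -> gV G) (pD : gD C -> gD G)
  (N : Type) (psi : (gV C -> gV C) -> (gD C -> gD C) -> N -> N) : Type :=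
  { h : N -> Prop | is_orbit C G pV pD psi h }.

Definition orbit_adj (C G : graph) (pV : gV C -> gV G) (pD : gD C -> gD G)
  (N : Type) (adj : N -> N -> Prop)
  (psi : (gV C -> gV C) -> (gD C -> gD C) -> N -> N)
  (h h' : orbitV C G pV pD psi) : Prop :=
  exists s s', adj s s' /\ proj1_sig h s /\ proj1_sig h' s'.

(* G_h = p(C[V_t]) for t in h: vertex set and dart set *)
Definition partV (C G : graph) (pV : gV C -> gV G) (pD : gD C -> gD G)
  (N : Type) (psi : (gV C -> gV C) -> (gD C -> gD C) -> N -> N)
  (Vt : N -> gV C -> Prop) (h : orbitV C G pV pD psi) (w : gV G) : Prop :=
  exists t, proj1_sig h t /\ exists v, Vt t v /\ pV v = w.

Definition partD (C G : graph) (pV : gV C -> gV G) (pD : gD C -> gD G)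
  (N : Type) (psi : (gV C -> gV C) -> (gD C -> gD C) -> N -> N)
  (Vt : N -> gV C -> Prop) (h : orbitV C G pV pD psi) (e : gD G) : Prop :=
  exists t, proj1_sig h t /\
    exists d, Vt t (gtl C d) /\ Vt t (gtl C (grev C d)) /\ pD d = e.

Definition graph_decomposition (G : graph) (Hv : Type)
  (Hadj : Hv -> Hv -> Prop) (GV : Hv -> gV G -> Prop)
  (GD : Hv -> gD G -> Prop) : Prop :=
  (forall h d, GD h d -> GV h (gtl G d) /\ GD h (grev G d)) /\
  (forall w, exists h, GV h w) /\
  (forall d, exists h, GD h d) /\
  (forall w h1 h2, GV h1 w -> GV h2 w ->
     reach (fun a b => Hadj a b /\ GV a w /\ GV b w) h1 h2).

Definition honest (G : graph) (Hv : Type) (Hadj : Hv -> Hv -> Prop)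
  (GV : Hv -> gV G -> Prop) (GD : Hv -> gD G -> Prop) : Prop :=
  graph_decomposition G Hadj GV GD /\
  forall h h', Hadj h h' -> exists w, GV h w /\ GV h' w.

(* Each part G_h is the image under p of a bag, so the covering and subgraph
   axioms of (H, (G_h)) are inherited from the tree-decomposition.  If w lies
   in G_h1 and G_h2, witnessed by lifts v1 in V_t1 and v2 in V_t2, a deck
   transformation maps v1 to v2 and t1 to a node of the orbit h1 whose bag
   contains v2; the subtree of T whose bags contain v2 then projects to a
   walk from h1 to h2 in H through parts containing w.  Honesty comes from
   adhesion: if adjacent bags V_s, V_s' were disjoint, the side of the
   separation induced by ss' containing V_s would be closed under adjacency
   in C, hence all of V(C) by connectedness, contradicting regularity. *)
From Stdlib Require Import List Classical FunctionalExtensionality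
  PropExtensionality ProofIrrelevance.
Import ListNotations.

Section Reach.

Context {X : Type} {R : X -> X -> Prop}.

Lemma reach_refl x : reach R x x.
Proof. exists []; reflexivity. Qed.

Lemma reach_snoc {x y z} : reach R x y -> R y z -> reach R x z.
Proof.
  intros [l W] Ryz. exists (l ++ [z]). revert x W.
  induction l as [|a l IH]; simpl; intros x W.
  - subst; auto.
  - destruct W; split; auto.
Qed.

Lemma reach_invariant (P : X -> Prop) :
  (forall a b, R a b -> P a -> P b) -> forall x y, reach R x y -> P x -> P y.
Proof.
  intros HP x y [l W]. revert x W.
  induction l as [|a l IH]; simpl; intros x W Px.
  - subst; auto.
  - destruct W as [Rxa W]; eauto.
Qed.

Lemma reach_map {Y : Type} {S : Y -> Y -> Prop} (f : X -> Y) :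
  (forall a b, R a b -> S (f a) (f b)) ->
  forall x y, reach R x y -> reach S (f x) (f y).
Proof.
  intros HRS x y [l W]. exists (map f l). revert x W.
  induction l as [|a l IH]; simpl; intros x W.
  - subst; auto.
  - destruct W; split; auto.
Qed.

End Reach.

Section Adhesion.

Context {C : graph} {N : Type} {adj : N -> N -> Prop} {Vt : N -> gV C -> Prop}.
Hypothesis Htd : tree_decomposition C adj Vt.

Lemma sep_side_gadj_closed {s s'} :
  adj s s' -> ~ (exists v, Vt s v /\ Vt s' v) ->
  forall u w, gadj C u w -> sep_side C adj Vt s s' u -> sep_side C adj Vt s s' w.
Proof.
  intros Hss Hdisj u w [d [<- <-]] [r [Hr Vr]].
  destruct Htd as [_ [_ [_ [dcov bagconn]]]].
  destruct (dcov d) as [t [Vt1 Vt2]].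
  exists t; split; [|exact Vt2].
  refine (reach_invariant _ _ r t (bagconn _ r t Vr Vt1) Hr).
  (* a walk through bags containing [gtl C d] never crosses ss',
     as V_s and V_s' are disjoint *)
  intros a b [Hab [Va Vb]] Ha.
  apply (reach_snoc Ha).
  split; [exact Hab|].
  split; intros [-> ->]; apply Hdisj; eauto.
Qed.

Lemma adjacent_bags_meet :
  connected_graph C -> regular_td C adj Vt ->
  forall s s', adj s s' -> exists v, Vt s v /\ Vt s' v.
Proof.
  intros Cconn reg s s' Hss. apply NNPP; intro Hdisj.
  destruct (reg s s' Hss) as [[b Hb] _].
  destruct Htd as [_ [bagne _]]. destruct (bagne s) as [a Ha].
  apply Hb.
  refine (reach_invariant _ (sep_side_gadj_closed Hss Hdisj) a b (Cconn a b) _).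
  exists s; split; [apply reach_refl | exact Ha].
Qed.

End Adhesion.

Section Deck.

Context {C G : graph} {pV : gV C -> gV G} {pD : gD C -> gD G}.

Lemma deck_id : deck C G pV pD (fun v => v) (fun d => d).
Proof.
  repeat split; auto; exists (fun x => x); auto.
Qed.

Lemma deck_comp fV1 fD1 fV2 fD2 :
  deck C G pV pD fV1 fD1 -> deck C G pV pD fV2 fD2 ->
  deck C G pV pD (fun v => fV1 (fV2 v)) (fun d => fD1 (fD2 d)).
Proof.
  intros [[g1 [g1a g1b]] [[h1 [h1a h1b]] [[t1 r1] [p1 q1]]]]
         [[g2 [g2a g2b]] [[h2 [h2a h2b]] [[t2 r2] [p2 q2]]]].
  split; [exists (fun v => g2 (g1 v)); split; intros; congruence|].
  split; [exists (fun d => h2 (h1 d)); split; intros; congruence|].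
  repeat split; intros; congruence.
Qed.

Lemma deck_inv {fV fD} :
  deck C G pV pD fV fD ->
  exists gV0 gD0, deck C G pV pD gV0 gD0 /\
    (forall v, gV0 (fV v) = v) /\ (forall d, gD0 (fD d) = d).
Proof.
  intros [[g [ga gb]] [[h [ha hb]] [[t r] [p q]]]].
  exists g, h.
  split; [|split; assumption].
  split; [exists fV; split; assumption|].
  split; [exists fD; split; assumption|].
  split; [split|split].
  - intro d. rewrite <- (ga (gtl C (h d))), <- t, hb. reflexivity.
  - intro d. rewrite <- (ha (grev C (h d))), r, hb. reflexivity.
  - intro v. rewrite <- (p (g v)), gb. reflexivity.
  - intro d. rewrite <- (q (h d)), hb. reflexivity.
Qed.

End Deck.

Section Orbits.

Context {C G : graph} {pV : gV C -> gV G} {pD : gD C -> gD G}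
  {N : Type} {adj : N -> N -> Prop} {Vt : N -> gV C -> Prop}
  {psi : (gV C -> gV C) -> (gD C -> gD C) -> N -> N}.
Hypothesis Hcw : canonical_witness C G pV pD adj Vt psi.

Local Notation HV := (orbitV C G pV pD psi).

Lemma psi_id t : psi (fun v => v) (fun d => d) t = t.
Proof.
  destruct Hcw as [cw_aut cw_mul].
  destruct (cw_aut _ _ deck_id) as [[[g [ga _]] _] _].
  (* psi id is idempotent and injective *)
  pose proof (f_equal g (cw_mul _ _ _ _ deck_id deck_id t)) as E.
  cbv beta in E. rewrite !ga in E. symmetry; exact E.
Qed.

Lemma same_orbit_refl t : same_orbit C G pV pD psi t t.
Proof. exists (fun v => v), (fun d => d). split; [apply deck_id | apply psi_id]. Qed.

Lemma same_orbit_trans {a b c} :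
  same_orbit C G pV pD psi a b -> same_orbit C G pV pD psi b c ->
  same_orbit C G pV pD psi a c.
Proof.
  intros [f1 [g1 [D1 <-]]] [f2 [g2 [D2 <-]]].
  exists (fun v => f2 (f1 v)), (fun d => g2 (g1 d)).
  split; [now apply deck_comp|].
  apply (proj2 Hcw); assumption.
Qed.

Lemma same_orbit_sym {a b} :
  same_orbit C G pV pD psi a b -> same_orbit C G pV pD psi b a.
Proof.
  intros [f [g [D <-]]].
  destruct (deck_inv D) as [fi [gi [Di [fiK giK]]]].
  exists fi, gi. split; [exact Di|].
  rewrite <- (proj2 Hcw) by assumption.
  replace (fun v => fi (f v)) with (fun v : gV C => v)
    by (apply functional_extensionality; auto).
  replace (fun d => gi (g d)) with (fun d : gD C => d)
    by (apply functional_extensionality; auto).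
  apply psi_id.
Qed.

Definition orbit_of (t : N) : HV :=
  exist _ (same_orbit C G pV pD psi t) (ex_intro _ t (fun s => iff_refl _)).

Lemma orbitV_eq {h : HV} {t} : proj1_sig h t -> h = orbit_of t.
Proof.
  destruct h as [P [t0 HP]]; simpl; intro Pt.
  assert (EP : P = same_orbit C G pV pD psi t).
  { apply functional_extensionality; intro s; apply propositional_extensionality.
    rewrite HP. apply HP in Pt. split; intro Hs.
    - exact (same_orbit_trans (same_orbit_sym Pt) Hs).
    - exact (same_orbit_trans Pt Hs). }
  subst P. unfold orbit_of. f_equal. apply proof_irrelevance.
Qed.

Lemma partV_orbit_of t v : Vt t v -> partV Vt (orbit_of t) (pV v).
Proof. intro Vv. exists t; split; [apply same_orbit_refl | eauto]. Qed.

Lemma orbit_adj_orbit_of s s' : adj s s' -> orbit_adj adj (orbit_of s) (orbit_of s').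
Proof. intro Hss. exists s, s'. split; [exact Hss | split; apply same_orbit_refl]. Qed.

Lemma partD_subgraph :
  ghom C G pV pD ->
  forall (h : HV) e, partD Vt h e -> partV Vt h (gtl G e) /\ partD Vt h (grev G e).
Proof.
  intros [hom_tl hom_rev] h e [t [Ht [d [V1 [V2 <-]]]]]. split.
  - exists t; split; [exact Ht|]. exists (gtl C d); auto.
  - exists t; split; [exact Ht|]. exists (grev C d). rewrite grev_inv. auto.
Qed.

Lemma partV_cover :
  covering C G pV pD -> tree_decomposition C adj Vt ->
  forall w, exists h : HV, partV Vt h w.
Proof.
  intros [_ [_ [surj _]]] [_ [_ [vcov _]]] w.
  destruct (surj w) as [v <-]. destruct (vcov v) as [t Vv].
  exists (orbit_of t). now apply partV_orbit_of.
Qed.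

Lemma partD_cover :
  covering C G pV pD -> tree_decomposition C adj Vt ->
  forall e, exists h : HV, partD Vt h e.
Proof.
  intros [_ [_ [surj lift]]] [_ [_ [_ [dcov _]]]] e.
  destruct (surj (gtl G e)) as [v Hv].
  destruct (lift v e (eq_sym Hv)) as [d [[dv de] _]].
  destruct (dcov d) as [t [V1 V2]].
  exists (orbit_of t), t. split; [apply same_orbit_refl | eauto].
Qed.

Lemma partV_connected :
  normal_covering C G pV pD -> tree_decomposition C adj Vt ->
  forall w (h1 h2 : HV), partV Vt h1 w -> partV Vt h2 w ->
  reach (fun a b => orbit_adj adj a b /\ partV Vt a w /\ partV Vt b w) h1 h2.
Proof.
  intros [_ normal] [_ [_ [_ [_ bagconn]]]]
    w h1 h2 [t1 [H1 [v1 [V1 E1]]]] [t2 [H2 [v2 [V2 <-]]]].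
  destruct (normal v1 v2 E1) as [f [g [Dfg fv]]].
  assert (V1' : Vt (psi f g t1) v2) by (apply (proj1 Hcw f g Dfg); eauto).
  assert (Eo : orbit_of t1 = orbit_of (psi f g t1))
    by (apply orbitV_eq; exists f, g; auto).
  rewrite (orbitV_eq H1), (orbitV_eq H2), Eo.
  refine (reach_map orbit_of _ _ _ (bagconn v2 _ t2 V1' V2)).
  intros a b [Hab [Va Vb]].
  split; [now apply orbit_adj_orbit_of|].
  split; now apply partV_orbit_of.
Qed.

Lemma orbit_adj_parts_meet :
  (forall s s', adj s s' -> exists v, Vt s v /\ Vt s' v) ->
  forall h h' : HV, orbit_adj adj h h' -> exists w, partV Vt h w /\ partV Vt h' w.
Proof.
  intros adhesion h h' [s [s' [Hss [Hs Hs']]]].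
  destruct (adhesion s s' Hss) as [v [Vs Vs']].
  exists (pV v). split; [exists s | exists s']; eauto.
Qed.

End Orbits.

Theorem lemma3p9 (C G : graph) (pV : gV C -> gV G) (pD : gD C -> gD G)
  (N : Type) (adj : N -> N -> Prop) (Vt : N -> gV C -> Prop)
  (psi : (gV C -> gV C) -> (gD C -> gD C) -> N -> N) :
  connected_graph G ->
  normal_covering C G pV pD ->
  tree_decomposition C adj Vt ->
  regular_td C adj Vt ->
  canonical_witness C G pV pD adj Vt psi ->
  honest G (@orbit_adj C G pV pD N adj psi)
    (@partV C G pV pD N psi Vt) (@partD C G pV pD N psi Vt).
Proof.
  (* connectedness of G is implied by that of C *)
  intros _ Hnc Htd reg Hcw.
  pose proof (proj1 Hnc) as Hcov.
  split; [split; [|split; [|split]]|].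
  - exact (partD_subgraph (proj1 (proj2 Hcov))).
  - exact (partV_cover Hcw Hcov Htd).
  - exact (partD_cover Hcw Hcov Htd).
  - exact (partV_connected Hcw Hnc Htd).
  - exact (orbit_adj_parts_meet (adjacent_bags_meet Htd (proj1 Hcov) reg)).
Qed.
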